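(* Every C*-algebra that is countably degree-2 saturated is countably quantifier-free saturated.
   Context: For $F\subseteq\mathbb R$ and $\varepsilon>0$ let $F_\varepsilon=\{x\in\mathbb R:\operatorname{dist}(x,F)\le\varepsilon\}$. For a class $\Phi$ of *-polynomials (noncommutative polynomials in variables $x_j,x_j^*$, $j\in\mathbb N$, with coefficients in the algebra), a C*-algebra $M$ is countably $\Phi$-saturated if for every sequence $P_n(\bar x)$ ($n\in\mathbb N$) of *-polynomials in $\Phi$ with coefficients in $M$ in variables $x_k$ ($k\in\mathbb N$) and every sequence of compact sets $K_n\subseteq\mathbb R$, the following are equivalent: (i) there are $b_k$ ($k\in\mathbb N$) in the unit ball of $M$ with $\|P_n(\bar b)\|\in K_n$ for all $n$; (ii) for every $m$ there are $b_k$ in the unit ball of $M$ with $\|P_n(\bar b)\|\in (K_n)_{1/m}$ for all $n\le m$. Countably degree-2 saturated means countably $\Phi$-saturated for $\Phi$ the *-polynomials of degree at most 2; countably quantifier-free saturated means countably $\Phi$-saturated for $\Phi$ the class of all *-polynomials. *)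

From Stdlib Require Import Reals Rtopology List.
Open Scope R_scope.

Definition C : Type := (R * R)%type.
Definition Cadd (z w : C) : C := (fst z + fst w, snd z + snd w).
Definition Cmul (z w : C) : C :=
  (fst z * fst w - snd z * snd w, fst z * snd w + snd z * fst w).
Definition Cconj (z : C) : C := (fst z, - snd z).
Definition Cmod (z : C) : R := sqrt (fst z ^ 2 + snd z ^ 2).
Definition C0 : C := (0, 0).
Definition C1 : C := (1, 0).

Record CStarAlgebra : Type := {
  car :> Type;
  zero : car;
  add : car -> car -> car;
  opp : car -> car;
  scal : C -> car -> car;
  mul : car -> car -> car;
  star : car -> car;
  norm : car -> R;
  add_assoc : forall x y z, add x (add y z) = add (add x y) z;
  add_comm : forall x y, add x y = add y x;
  add_zero : forall x, add x zero = x;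
  add_opp : forall x, add x (opp x) = zero;
  scal_one : forall x, scal C1 x = x;
  scal_assoc : forall a b x, scal a (scal b x) = scal (Cmul a b) x;
  scal_addl : forall a b x, scal (Cadd a b) x = add (scal a x) (scal b x);
  scal_addr : forall a x y, scal a (add x y) = add (scal a x) (scal a y);
  mul_assoc : forall x y z, mul x (mul y z) = mul (mul x y) z;
  mul_addl : forall x y z, mul (add x y) z = add (mul x z) (mul y z);
  mul_addr : forall x y z, mul x (add y z) = add (mul x y) (mul x z);
  mul_scall : forall a x y, mul (scal a x) y = scal a (mul x y);
  mul_scalr : forall a x y, mul x (scal a y) = scal a (mul x y);
  star_star : forall x, star (star x) = x;
  star_add : forall x y, star (add x y) = add (star x) (star y);
  star_scal : forall a x, star (scal a x) = scal (Cconj a) (star x);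
  star_mul : forall x y, star (mul x y) = mul (star y) (star x);
  norm_eq0 : forall x, norm x = 0 -> x = zero;
  norm_scal : forall a x, norm (scal a x) = Cmod a * norm x;
  norm_triangle : forall x y, norm (add x y) <= norm x + norm y;
  norm_submult : forall x y, norm (mul x y) <= norm x * norm y;
  complete : forall u : nat -> car,
    (forall eps, eps > 0 -> exists N, forall n m, (n >= N)%nat -> (m >= N)%nat ->
        norm (add (u n) (opp (u m))) < eps) ->
    exists l, forall eps, eps > 0 -> exists N, forall n, (n >= N)%nat ->
        norm (add (u n) (opp l)) < eps;
  cstar_id : forall x, norm (mul (star x) x) = norm x ^ 2
}.

(** A factor is either a coefficient from M or a variable letter
    (x_j if the flag is false, x_j^* if it is true).  A monomial is a complex
    scalar times a nonempty word of factors; a *-polynomial is a finite sum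
    of monomials. *)
Inductive factor (M : CStarAlgebra) : Type :=
| FCoef : M -> factor M
| FVar : nat -> bool -> factor M.
Arguments FCoef {M} _.
Arguments FVar {M} _ _.

Record monomial (M : CStarAlgebra) : Type := Mono {
  mono_scal : C;
  mono_head : factor M;
  mono_tail : list (factor M)
}.
Arguments Mono {M} _ _ _.
Arguments mono_scal {M} _.
Arguments mono_head {M} _.
Arguments mono_tail {M} _.

Definition starpoly (M : CStarAlgebra) : Type := list (monomial M).

Definition eval_factor {M : CStarAlgebra} (b : nat -> M) (f : factor M) : M :=
  match f with
  | FCoef a => a
  | FVar j false => b j
  | FVar j true => star M (b j)
  end.

Definition eval_monomial {M : CStarAlgebra} (b : nat -> M) (m : monomial M) : M :=
  scal M (mono_scal m)
    (fold_left (fun acc f => mul M acc (eval_factor b f))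
       (mono_tail m) (eval_factor b (mono_head m))).

Definition eval_poly {M : CStarAlgebra} (b : nat -> M) (P : starpoly M) : M :=
  fold_right (fun m acc => add M (eval_monomial b m) acc) (zero M) P.

Definition factor_deg {M : CStarAlgebra} (f : factor M) : nat :=
  match f with FCoef _ => 0%nat | FVar _ _ => 1%nat end.

Definition monomial_deg {M : CStarAlgebra} (m : monomial M) : nat :=
  (factor_deg (mono_head m) + fold_right (fun f n => factor_deg f + n) 0 (mono_tail m))%nat.

Definition deg_le2 {M : CStarAlgebra} (P : starpoly M) : Prop :=
  forall m, In m P -> (monomial_deg m <= 2)%nat.

Definition all_polys {M : CStarAlgebra} (P : starpoly M) : Prop := True.

(** F_eps = { x : dist(x, F) <= eps }, dist(x,F) = inf_{y in F} |x - y|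
    (with inf of the empty set = +infinity). *)
Definition eps_nbhd (F : R -> Prop) (eps : R) : R -> Prop :=
  fun x => forall d, d > 0 -> exists y, F y /\ Rabs (x - y) < eps + d.

Definition in_unit_ball {M : CStarAlgebra} (b : nat -> M) : Prop :=
  forall k, norm M (b k) <= 1.

Definition countably_saturated (M : CStarAlgebra) (Phi : starpoly M -> Prop) : Prop :=
  forall (P : nat -> starpoly M) (K : nat -> (R -> Prop)),
    (forall n, Phi (P n)) ->
    (forall n, compact (K n)) ->
    ((exists b : nat -> M, in_unit_ball b /\
        forall n, K n (norm M (eval_poly b (P n))))
     <->
     (forall m : nat, (1 <= m)%nat ->
        exists b : nat -> M, in_unit_ball b /\
          forall n, (n <= m)%nat ->
            eps_nbhd (K n) (/ INR m) (norm M (eval_poly b (P n))))).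

Definition countably_deg2_saturated (M : CStarAlgebra) : Prop :=
  countably_saturated M deg_le2.

Definition countably_qf_saturated (M : CStarAlgebra) : Prop :=
  countably_saturated M all_polys.

From Pilot Require Import Defs.
From Stdlib Require Import Reals Rtopology List.
From Stdlib Require Import Lra Lia Arith Cantor.

(** The implication (i) -> (ii) in the definition of saturation holds for any
    sequence of conditions, so only (ii) -> (i) needs work.  Given arbitrary
    *-polynomials P_n and compact sets K_n, we build a degree-2 system that is
    equivalent to it.  Variable x_j of the P_n becomes variable x_(2j); each
    partial product of the i-th monomial of P_n (its first j+1 factors) gets an
    auxiliary odd variable z_(n,i,j), rescaled by the inverse of a weight of
    the monomial so that it stays in the unit ball.  The new conditions are:
    the linear polynomial "P_n with every monomial replaced by its last z" must
    have norm in K_n, and each z_(n,i,j+1) - z_(n,i,j) t_j (resp. z_(n,i,0) -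
    head/weight) must have norm in {0}; all have degree at most 2.  Approximate
    solutions of the P_n lift (by filling in the partial products) to
    approximate solutions of the new system; degree-2 saturation yields an
    exact solution, whose vanishing conditions force the z's to be the true
    partial products, so its even part is an exact solution for the P_n. *)

Section CStarBasics.
Variable M : CStarAlgebra.

Definition Copp (a : Defs.C) : Defs.C := (- fst a, - snd a).

Lemma add_right_cancel (x y : M) : add M x y = x -> y = zero M.
Proof.
  intro H.
  transitivity (add M y (add M x (opp M x))).
  - rewrite add_opp; symmetry; apply add_zero.
  - rewrite add_assoc, (add_comm M y x), H. apply add_opp.
Qed.

Lemma scal_C0 (w : M) : scal M Defs.C0 w = zero M.
Proof.
  apply (add_right_cancel (scal M Defs.C0 w)).
  rewrite <- scal_addl. f_equal. unfold Cadd, Defs.C0; simpl. f_equal; ring.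
Qed.

Lemma add_scal_Copp (a : Defs.C) (w : M) :
  add M (scal M a w) (scal M (Copp a) w) = zero M.
Proof.
  rewrite <- scal_addl, <- (scal_C0 w). f_equal.
  unfold Cadd, Copp, Defs.C0; simpl. f_equal; ring.
Qed.

Lemma norm_zero : norm M (zero M) = 0.
Proof.
  rewrite <- (scal_C0 (zero M)), norm_scal. unfold Cmod, Defs.C0; simpl.
  replace (0 * (0 * 1) + 0 * (0 * 1)) with 0 by ring. rewrite sqrt_0. ring.
Qed.

Lemma norm_sub_eq0_iff (x w : M) (a : Defs.C) :
  norm M (add M x (scal M (Copp a) w)) = 0 <-> x = scal M a w.
Proof.
  split.
  - intro H. apply norm_eq0 in H.
    rewrite <- (add_zero M x), <- (add_scal_Copp a w), add_assoc,
      (add_comm M x), <- add_assoc, H, add_zero.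
    reflexivity.
  - intros ->. rewrite add_scal_Copp. apply norm_zero.
Qed.

(** Norms are nonnegative: 0 = ||x - x|| <= 2 ||x||. *)
Lemma norm_nonneg (x : M) : 0 <= norm M x.
Proof.
  pose proof (norm_triangle M x (scal M (Copp Defs.C1) x)) as H.
  replace (add M x (scal M (Copp Defs.C1) x)) with (zero M) in H
    by (rewrite <- (scal_one M x) at 1; symmetry; apply add_scal_Copp).
  rewrite norm_zero, norm_scal in H.
  unfold Cmod, Copp, Defs.C1 in H; simpl in H.
  replace (- (1) * (- (1) * 1) + - (0) * (- (0) * 1)) with 1 in H by ring.
  rewrite sqrt_1 in H. lra.
Qed.

(** The involution is isometric, a consequence of the C*-identity. *)
Lemma norm_star (x : M) : norm M (star M x) = norm M x.
Proof.
  assert (Hle : forall y : M, norm M y <= norm M (star M y)).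
  { intro y. pose proof (cstar_id M y) as E.
    pose proof (norm_submult M (star M y) y).
    pose proof (norm_nonneg y). pose proof (norm_nonneg (star M y)). nra. }
  apply Rle_antisym; [|apply Hle].
  rewrite <- (star_star M x) at 2. apply Hle.
Qed.

End CStarBasics.

Lemma firstn_succ_nth_error {A : Type} (l : list A) (j : nat) (t : A) :
  nth_error l j = Some t -> firstn (S j) l = firstn j l ++ t :: nil.
Proof.
  revert l; induction j as [|j IH]; intros [|x l] H; simpl in *; try discriminate.
  - now inversion H.
  - f_equal. now apply IH.
Qed.

Section PartialProducts.
Variable M : CStarAlgebra.

Definition mul_factor (b : nat -> M) (acc : M) (f : factor M) : M :=
  mul M acc (eval_factor b f).

(** The product of the first [j+1] factors of [m] (without its scalar). *)
Definition partial (b : nat -> M) (m : monomial M) (j : nat) : M :=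
  fold_left (mul_factor b) (firstn j (mono_tail m)) (eval_factor b (mono_head m)).

Lemma partial_succ (b : nat -> M) (m : monomial M) (j : nat) (t : factor M) :
  nth_error (mono_tail m) j = Some t ->
  partial b m (S j) = mul M (partial b m j) (eval_factor b t).
Proof.
  intro Ht. unfold partial. now rewrite (firstn_succ_nth_error _ _ _ Ht), fold_left_app.
Qed.

Lemma eval_monomial_partial (b : nat -> M) (m : monomial M) :
  eval_monomial b m = scal M (mono_scal m) (partial b m (length (mono_tail m))).
Proof. unfold partial. now rewrite firstn_all. Qed.

(** Weights bounding the norm of an evaluation at points of the unit ball. *)
Definition factor_weight (f : factor M) : R :=
  match f with FCoef a => 1 + norm M a | FVar _ _ => 1 end.

Definition list_weight (l : list (factor M)) : R :=
  fold_right (fun f r => factor_weight f * r) 1 l.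

Definition monomial_weight (m : monomial M) : R :=
  factor_weight (mono_head m) * list_weight (mono_tail m).

Lemma factor_weight_ge1 (f : factor M) : 1 <= factor_weight f.
Proof. destruct f as [a|j s]; simpl; [pose proof (norm_nonneg M a)|]; lra. Qed.

Lemma list_weight_ge1 (l : list (factor M)) : 1 <= list_weight l.
Proof.
  induction l as [|f l IH]; simpl; [lra|]. pose proof (factor_weight_ge1 f). nra.
Qed.

Lemma monomial_weight_ge1 (m : monomial M) : 1 <= monomial_weight m.
Proof.
  unfold monomial_weight.
  pose proof (factor_weight_ge1 (mono_head m)). pose proof (list_weight_ge1 (mono_tail m)).
  nra.
Qed.

Lemma list_weight_firstn (j : nat) (l : list (factor M)) :
  list_weight (firstn j l) <= list_weight l.
Proof.
  revert l; induction j as [|j IH]; intro l; [apply list_weight_ge1|].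
  destruct l as [|f l]; simpl; [lra|].
  pose proof (factor_weight_ge1 f). pose proof (IH l). nra.
Qed.

Lemma eval_factor_norm_le (b : nat -> M) (f : factor M) :
  in_unit_ball b -> norm M (eval_factor b f) <= factor_weight f.
Proof.
  intro Hb. destruct f as [a|j [|]]; simpl.
  - lra.
  - rewrite norm_star. apply Hb.
  - apply Hb.
Qed.

Lemma fold_norm_le (b : nat -> M) (l : list (factor M)) (x : M) :
  in_unit_ball b -> norm M (fold_left (mul_factor b) l x) <= norm M x * list_weight l.
Proof.
  intro Hb. revert x. induction l as [|f l IH]; intro x; simpl; [lra|].
  eapply Rle_trans; [apply IH|]. unfold mul_factor.
  rewrite <- Rmult_assoc. apply Rmult_le_compat_r; [pose proof (list_weight_ge1 l); lra|].
  pose proof (norm_submult M x (eval_factor b f)).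
  pose proof (eval_factor_norm_le b f Hb). pose proof (norm_nonneg M x).
  nra.
Qed.

Definition rescale (m : monomial M) : Defs.C := (/ monomial_weight m, 0).

Lemma rescaled_partial_norm_le (b : nat -> M) (m : monomial M) (j : nat) :
  in_unit_ball b -> norm M (scal M (rescale m) (partial b m j)) <= 1.
Proof.
  intro Hb. pose proof (monomial_weight_ge1 m) as HW.
  assert (Hpart : norm M (partial b m j) <= monomial_weight m).
  { unfold partial, monomial_weight.
    pose proof (fold_norm_le b (firstn j (mono_tail m)) (eval_factor b (mono_head m)) Hb).
    pose proof (eval_factor_norm_le b (mono_head m) Hb).
    pose proof (list_weight_firstn j (mono_tail m)).
    pose proof (list_weight_ge1 (firstn j (mono_tail m))).
    pose proof (norm_nonneg M (eval_factor b (mono_head m))).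
    pose proof (factor_weight_ge1 (mono_head m)).
    nra. }
  rewrite norm_scal. unfold Cmod, rescale; simpl.
  replace (/ monomial_weight m * (/ monomial_weight m * 1) + 0 * (0 * 1))
    with ((/ monomial_weight m) ^ 2) by ring.
  rewrite sqrt_pow2 by (left; apply Rinv_0_lt_compat; lra).
  apply (Rmult_le_reg_l (monomial_weight m)); [lra|].
  rewrite <- Rmult_assoc, Rinv_r by lra. lra.
Qed.

End PartialProducts.

Section Equations.
Variable M : CStarAlgebra.

(** The *-polynomial x_v - a h t_1 ... t_k, of degree at most 2 when
    [h :: t] contains at most one variable. *)
Definition equation (v : nat) (a : Defs.C) (h : factor M) (t : list (factor M)) : starpoly M :=
  Mono Defs.C1 (FVar v false) nil :: Mono (Copp a) h t :: nil.

Lemma equation_norm_eq0_iff (b : nat -> M) v a h t :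
  norm M (eval_poly b (equation v a h t)) = 0 <->
  b v = scal M a (fold_left (mul_factor M b) t (eval_factor b h)).
Proof.
  unfold equation, eval_poly, eval_monomial; cbn [fold_right mono_scal mono_head
    mono_tail fold_left eval_factor].
  rewrite scal_one, add_zero. apply norm_sub_eq0_iff.
Qed.

Definition rename_even (f : factor M) : factor M :=
  match f with FCoef a => FCoef a | FVar j s => FVar (2 * j) s end.

Definition even_part (b : nat -> M) : nat -> M := fun j => b (2 * j)%nat.

Lemma eval_rename_even (b : nat -> M) (f : factor M) :
  eval_factor b (rename_even f) = eval_factor (even_part b) f.
Proof. now destruct f as [a|j [|]]. Qed.

Lemma eval_factor_ext (b b' : nat -> M) (f : factor M) :
  (forall j, b j = b' j) -> eval_factor b f = eval_factor b' f.
Proof. intro E. destruct f as [a|j [|]]; simpl; rewrite ?E; reflexivity. Qed.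

Lemma factor_deg_rename_even (f : factor M) : factor_deg (rename_even f) = factor_deg f.
Proof. now destruct f. Qed.

Lemma factor_deg_le1 (f : factor M) : (factor_deg f <= 1)%nat.
Proof. destruct f; simpl; lia. Qed.

End Equations.

Lemma eps_nbhd_self (F : R -> Prop) (eps x : R) : 0 <= eps -> F x -> eps_nbhd F eps x.
Proof.
  intros Heps Hx d Hd. exists x. split; [exact Hx|].
  unfold Rminus; rewrite Rplus_opp_r, Rabs_R0. lra.
Qed.

Lemma inv_INR_nonneg (m : nat) : 0 <= / INR m.
Proof.
  destruct m as [|m]; [simpl; rewrite Rinv_0; lra|].
  left. apply Rinv_0_lt_compat, lt_0_INR. lia.
Qed.

Lemma exact_solution_approx (M : CStarAlgebra) (P : nat -> starpoly M) (K : nat -> R -> Prop) :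
  (exists b : nat -> M, in_unit_ball b /\ forall n, K n (norm M (eval_poly b (P n)))) ->
  forall m : nat, (1 <= m)%nat ->
    exists b : nat -> M, in_unit_ball b /\
      forall n, (n <= m)%nat -> eps_nbhd (K n) (/ INR m) (norm M (eval_poly b (P n))).
Proof.
  intros [b [Hb HK]] m _. exists b. split; [exact Hb|].
  intros n _. apply eps_nbhd_self; [apply inv_INR_nonneg | apply HK].
Qed.

(** * The degree-2 system attached to a sequence of *-polynomials *)

(** Index of the auxiliary variable z_(n,i,j); original variables use even indices. *)
Definition aux_index (n i j : nat) : nat :=
  (2 * Cantor.to_nat (n, Cantor.to_nat (i, j)) + 1)%nat.

Definition aux_decode (c : nat) : nat * (nat * nat) :=
  let (n, c') := Cantor.of_nat c in (n, Cantor.of_nat c').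

Lemma aux_decode_code (n i j : nat) :
  aux_decode (Cantor.to_nat (n, Cantor.to_nat (i, j))) = (n, (i, j)).
Proof. unfold aux_decode. now rewrite !Cantor.cancel_of_to. Qed.

Lemma aux_code_surj (c : nat) : exists n i j, c = Cantor.to_nat (n, Cantor.to_nat (i, j)).
Proof.
  destruct (Cantor.of_nat c) as [n c'] eqn:E.
  destruct (Cantor.of_nat c') as [i j] eqn:E2.
  exists n, i, j. now rewrite <- E2, Cantor.cancel_to_of, <- E, Cantor.cancel_to_of.
Qed.

Lemma even_odd_index (c : nat) :
  Nat.even (2 * c + 1) = false /\ Nat.div2 (2 * c + 1) = c.
Proof. split; [apply Nat.even_odd | now rewrite Nat.add_1_r, Nat.div2_succ_double]. Qed.

Lemma even_even_index (j : nat) : Nat.even (2 * j) = true /\ Nat.div2 (2 * j) = j.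
Proof. split; [apply Nat.even_even | apply Nat.div2_double]. Qed.

Section Reduction.
Variable M : CStarAlgebra.
Variable P : nat -> starpoly M.

(** P_n with its i-th monomial c m replaced by (c weight(m)) z_(n,i,last). *)
Fixpoint linearized (n i : nat) (l : list (monomial M)) : starpoly M :=
  match l with
  | nil => nil
  | m :: l' =>
      Mono (Cmul (mono_scal m) (monomial_weight M m, 0))
           (FVar (aux_index n i (length (mono_tail m))) false) nil
      :: linearized n (S i) l'
  end.

(** The equation defining z_(n,i,j) from z_(n,i,j-1) (or from the head if j = 0). *)
Definition link_poly (n i j : nat) : starpoly M :=
  match nth_error (P n) i with
  | None => nil
  | Some m =>
      match j with
      | O => equation M (aux_index n i 0) (rescale M m) (rename_even M (mono_head m)) nil
      | S j' =>
          match nth_error (mono_tail m) j' with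
          | None => nil
          | Some t => equation M (aux_index n i j) Defs.C1 (FVar (aux_index n i j') false)
                        (rename_even M t :: nil)
          end
      end
  end.

Definition reduced_poly (q : nat) : starpoly M :=
  if Nat.even q then linearized (Nat.div2 q) 0 (P (Nat.div2 q))
  else let '(n, (i, j)) := aux_decode (Nat.div2 q) in link_poly n i j.

Definition reduced_target (K : nat -> R -> Prop) (q : nat) : R -> Prop :=
  if Nat.even q then K (Nat.div2 q) else fun x => 0 <= x <= 0.

Definition lift (b : nat -> M) (q : nat) : M :=
  if Nat.even q then b (Nat.div2 q)
  else let '(n, (i, j)) := aux_decode (Nat.div2 q) in
       match nth_error (P n) i with
       | Some m => scal M (rescale M m) (partial M b m j)
       | None => zero M
       end.

Lemma reduced_poly_deg_le2 (q : nat) : deg_le2 (reduced_poly q).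
Proof.
  unfold reduced_poly. destruct (Nat.even q).
  - generalize 0%nat, (P (Nat.div2 q)).
    intros i l; revert i; induction l as [|mo l IH]; intros i m Hm; [contradiction|].
    destruct Hm as [<-|Hm]; [unfold monomial_deg; simpl; lia | exact (IH _ m Hm)].
  - destruct (aux_decode (Nat.div2 q)) as [n [i j]]. unfold link_poly.
    destruct (nth_error (P n) i) as [mo|]; [|intros m []].
    destruct j as [|j'];
      [|destruct (nth_error (mono_tail mo) j') as [t|]; [|intros m []]];
      intros m [<-|[<-|[]]]; unfold monomial_deg; simpl;
      rewrite ?factor_deg_rename_even; try lia.
    + pose proof (factor_deg_le1 M (mono_head mo)); lia.
    + pose proof (factor_deg_le1 M t); lia.
Qed.

Lemma reduced_target_compact (K : nat -> R -> Prop) :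
  (forall n, compact (K n)) -> forall q, compact (reduced_target K q).
Proof. intros HK q. unfold reduced_target. destruct (Nat.even q); [apply HK|apply compact_P3]. Qed.

Lemma even_part_lift (b : nat -> M) (j : nat) : even_part M (lift b) j = b j.
Proof. unfold even_part, lift. destruct (even_even_index j) as [-> ->]. reflexivity. Qed.

Lemma eval_rename_even_lift (b : nat -> M) (f : factor M) :
  eval_factor (lift b) (rename_even M f) = eval_factor b f.
Proof. rewrite eval_rename_even. apply eval_factor_ext, even_part_lift. Qed.

Lemma lift_aux (b : nat -> M) n i j m :
  nth_error (P n) i = Some m -> lift b (aux_index n i j) = scal M (rescale M m) (partial M b m j).
Proof.
  intro Hm. unfold lift, aux_index.
  destruct (even_odd_index (Cantor.to_nat (n, Cantor.to_nat (i, j)))) as [-> ->].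
  now rewrite aux_decode_code, Hm.
Qed.

Lemma lift_in_unit_ball (b : nat -> M) : in_unit_ball b -> in_unit_ball (lift b).
Proof.
  intros Hb q. unfold lift. destruct (Nat.even q); [apply Hb|].
  destruct (aux_decode (Nat.div2 q)) as [n [i j]].
  destruct (nth_error (P n) i) as [m|].
  - now apply rescaled_partial_norm_le.
  - rewrite norm_zero; lra.
Qed.

Lemma linearized_eval (b' b : nat -> M) (n i : nat) (l : list (monomial M)) :
  (forall i' m, nth_error l i' = Some m ->
     b' (aux_index n (i + i') (length (mono_tail m))) =
     scal M (rescale M m) (partial M b m (length (mono_tail m)))) ->
  eval_poly b' (linearized n i l) = eval_poly b l.
Proof.
  revert i; induction l as [|m l IH]; intros i H; [reflexivity|].
  simpl. f_equal.
  - specialize (H 0%nat m eq_refl). rewrite Nat.add_0_r in H.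
    rewrite (eval_monomial_partial M b m).
    unfold eval_monomial; cbn [mono_scal mono_head mono_tail fold_left eval_factor].
    rewrite H, scal_assoc. f_equal.
    pose proof (monomial_weight_ge1 M m). unfold rescale.
    destruct (mono_scal m) as [c1 c2]. unfold Cmul; simpl. f_equal; field; lra.
  - apply IH. intros i' m' Hm'. rewrite <- (H (S i') m' Hm'). do 2 f_equal. lia.
Qed.

Lemma linearized_eval_lift (b : nat -> M) (n : nat) :
  eval_poly (lift b) (linearized n 0 (P n)) = eval_poly b (P n).
Proof. apply linearized_eval. intros i' m Hm. now apply lift_aux. Qed.

Lemma link_poly_lift (b : nat -> M) (n i j : nat) :
  norm M (eval_poly (lift b) (link_poly n i j)) = 0.
Proof.
  unfold link_poly. destruct (nth_error (P n) i) as [m|] eqn:Hm; [|apply norm_zero].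
  destruct j as [|j'].
  - apply equation_norm_eq0_iff; simpl.
    now rewrite eval_rename_even_lift, (lift_aux b _ _ _ _ Hm).
  - destruct (nth_error (mono_tail m) j') as [t|] eqn:Ht; [|apply norm_zero].
    apply equation_norm_eq0_iff; simpl. unfold mul_factor.
    rewrite scal_one, (lift_aux b _ _ _ _ Hm), (lift_aux b _ _ _ _ Hm), mul_scall.
    now rewrite (partial_succ M b m j' t Ht), eval_rename_even_lift.
Qed.

Lemma link_poly_forces_partial (b' : nat -> M) (n i : nat) (m : monomial M) :
  nth_error (P n) i = Some m ->
  (forall j, norm M (eval_poly b' (link_poly n i j)) = 0) ->
  forall j, (j <= length (mono_tail m))%nat ->
    b' (aux_index n i j) = scal M (rescale M m) (partial M (even_part M b') m j).
Proof.
  intros Hm Hlink j. induction j as [|j IH]; intro Hj.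
  - pose proof (Hlink 0%nat) as H0. unfold link_poly in H0. rewrite Hm in H0.
    apply equation_norm_eq0_iff in H0. simpl in H0.
    now rewrite H0, eval_rename_even.
  - assert (Hlt : (j < length (mono_tail m))%nat) by lia.
    apply nth_error_Some in Hlt.
    destruct (nth_error (mono_tail m) j) as [t|] eqn:Ht; [|contradiction].
    pose proof (Hlink (S j)) as H0. unfold link_poly in H0. rewrite Hm, Ht in H0.
    apply equation_norm_eq0_iff in H0. simpl in H0. unfold mul_factor in H0.
    rewrite H0, scal_one, IH by lia.
    now rewrite eval_rename_even, (partial_succ M _ m j t Ht), mul_scall.
Qed.

Lemma reduced_approx (K : nat -> R -> Prop) (m : nat) (b : nat -> M) :
  (forall n, (n <= m)%nat -> eps_nbhd (K n) (/ INR m) (norm M (eval_poly b (P n)))) ->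
  forall q, (q <= m)%nat ->
    eps_nbhd (reduced_target K q) (/ INR m) (norm M (eval_poly (lift b) (reduced_poly q))).
Proof.
  intros Happrox q Hq. destruct (Nat.Even_or_Odd q) as [[k ->]|[c ->]].
  - unfold reduced_poly, reduced_target. destruct (even_even_index k) as [-> ->].
    rewrite linearized_eval_lift. apply Happrox. lia.
  - unfold reduced_poly, reduced_target. destruct (even_odd_index c) as [-> ->].
    destruct (aux_code_surj c) as (n & i & j & ->). rewrite aux_decode_code.
    apply eps_nbhd_self; [apply inv_INR_nonneg|]. rewrite link_poly_lift. lra.
Qed.

Lemma reduced_exact (K : nat -> R -> Prop) (b' : nat -> M) :
  (forall q, reduced_target K q (norm M (eval_poly b' (reduced_poly q)))) ->
  forall n, K n (norm M (eval_poly (even_part M b') (P n))).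
Proof.
  intros Hsol n.
  assert (Hlink : forall i j, norm M (eval_poly b' (link_poly n i j)) = 0).
  { intros i j. pose proof (Hsol (aux_index n i j)) as Hq.
    unfold reduced_poly, reduced_target, aux_index in Hq.
    destruct (even_odd_index (Cantor.to_nat (n, Cantor.to_nat (i, j)))) as [E1 E2].
    rewrite E1, E2, aux_decode_code in Hq. lra. }
  pose proof (Hsol (2 * n)%nat) as Hq. unfold reduced_poly, reduced_target in Hq.
  destruct (even_even_index n) as [E1 E2]. rewrite E1, E2 in Hq.
  rewrite (linearized_eval b' (even_part M b')) in Hq; [exact Hq|].
  intros i m Hm. now apply (link_poly_forces_partial b' n i m Hm).
Qed.

End Reduction.

Theorem mainTheorem2 (M : CStarAlgebra) :
  countably_deg2_saturated M -> countably_qf_saturated M.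
Proof.
  intros Hsat P K _ HK. split; [apply exact_solution_approx|].
  intro Happrox.
  assert (Hreduced_approx : forall m, (1 <= m)%nat ->
            exists b', in_unit_ball b' /\ forall q, (q <= m)%nat ->
              eps_nbhd (reduced_target K q) (/ INR m)
                (norm M (eval_poly b' (reduced_poly M P q)))).
  { intros m Hm. destruct (Happrox m Hm) as [b [Hb Hn]].
    exists (lift M P b). split; [apply lift_in_unit_ball, Hb | now apply reduced_approx]. }
  destruct (proj2 (Hsat (reduced_poly M P) (reduced_target K) (reduced_poly_deg_le2 M P)
                    (reduced_target_compact K HK)) Hreduced_approx) as [b' [Hb' Hsol]].
  exists (even_part M b'). split.
  - intro k. apply Hb'.
  - exact (reduced_exact M P K b' Hsol).
Qed.
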